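(* For every $\sigma\in\mathrm{Aut}(M_7)$, the action of $\sigma$ commutes with the action of $\Lambda_{\{2\},\{3\}}$, i.e. $\Lambda_{\{2\},\{3\}}\circ\sigma=\sigma\circ\Lambda_{\{2\},\{3\}}$ (in particular $\lambda_{\{2\},\{3\}}\circ\sigma=\sigma\circ\lambda_{\{2\},\{3\}}$ as rational self-maps of $\mathcal{R}_7$).
   Context: Over $\mathbb{C}$. For a line arrangement $\mathcal{C}$, $\Lambda_{\{2\},\{3\}}(\mathcal{C})$ is the union of lines containing exactly three double points of $\mathcal{C}$. For a labeled arrangement $\mathcal{C}_0=(\ell_1,\dots,\ell_7)$ let $H_j=\sum_{k\neq j}\ell_k$; the labeled image is $\Lambda_{\{2\},\{3\}}(\mathcal{C}_0)=(\Lambda_{\{2\},\{3\}}(H_1),\dots,\Lambda_{\{2\},\{3\}}(H_7))$. $M_7$ is the rank-3 matroid on $\{1,\dots,7,1',\dots,7'\}$ whose non-bases are the triples $\{a,b,c'\}$ with $a\neq b\in\{1,\dots,7\}$, $a+b\equiv2c\pmod7$; its realizations are labeled 14-line arrangements in which three lines are concurrent iff their labels form a non-basis, and for a realization $\mathcal{C}_0\cup\mathcal{C}_1$ one has $\mathcal{C}_1=\Lambda_{\{2\},\{3\}}(\mathcal{C}_0)$ (labeled). $\mathcal{R}_7$ is the moduli space of realizations up to $\mathrm{PGL}_3$; for generic realizations $\mathcal{C}_1\cup\Lambda_{\{2\},\{3\}}(\mathcal{C}_1)$ is again a realization, and $\lambda_{\{2\},\{3\}}:[\mathcal{C}_0\cup\mathcal{C}_1]\mapsto[\mathcal{C}_1\cup\Lambda_{\{2\},\{3\}}(\mathcal{C}_1)]$.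 $\mathrm{Aut}(M_7)$ is the group of permutations of the ground set preserving bases; each $\sigma$ preserves $\{1,\dots,7\}$ and acts on labeled arrangements (and on $\mathcal{R}_7$) by permuting labels. *)

From mathcomp Require Import all_boot all_fingroup all_algebra.
From mathcomp Require Import reals complex.
Set Implicit Arguments. Unset Strict Implicit. Unset Printing Implicit Defensive.
Import GRing.Theory Num.Theory.
Local Open Scope ring_scope.

(* ---------- The matroid M_7 ----------
   Ground set {1..7} u {1'..7'} is encoded as 'I_7 + 'I_7:
   label a (1<=a<=7) is  inl (a-1),  label c' is  inr (c-1).
   The condition a+b = 2c (mod 7) is invariant under this shift by 1. *)
Definition M7ground := ('I_7 + 'I_7)%type.

Definition M7nonbasis (B : {set M7ground}) : bool :=
  [exists a : 'I_7, exists b : 'I_7, exists c : 'I_7,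
     [&& a != b, ((a + b) %% 7 == (2 * c) %% 7)%N
       & B == [set inl a; inl b; inr c]]].

Definition M7basis (B : {set M7ground}) : bool :=
  (#|B| == 3)%N && ~~ M7nonbasis B.

Definition isAutM7 (s : {perm M7ground}) : Prop :=
  forall B : {set M7ground}, M7basis (s @: B) = M7basis B.

(* ---------- Projective plane geometry over a field K ----------
   Points and lines of P^2(K) are represented by nonzero row vectors of K^3
   (homogeneous coordinates); a point p lies on a line l iff p . l = 0. *)
Section Geometry.
Variable K : fieldType.

Definition proj_eq (u v : 'rV[K]_3) : Prop :=
  exists c : K, c != 0 /\ u = c *: v.

Definition incident (p l : 'rV[K]_3) : bool :=
  \sum_(i < 3) p 0 i * l 0 i == 0.

Definition arrangement7 (C : 'I_7 -> 'rV[K]_3) : Prop :=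
  (forall i, C i != 0) /\ (forall i j, i != j -> ~ proj_eq (C i) (C j)).

(* H_j = sum_{k <> j} l_k ; number of lines of H_j through p *)
Definition multH (C : 'I_7 -> 'rV[K]_3) (j : 'I_7) (p : 'rV[K]_3) : nat :=
  #|[set k : 'I_7 | (k != j) && incident p (C k)]|.

Definition double_pointH (C : 'I_7 -> 'rV[K]_3) (j : 'I_7) (p : 'rV[K]_3)
  : Prop := p != 0 /\ multH C j p = 2%N.

(* m is a line containing exactly three double points of H_j,
   i.e. m is one of the lines making up Lambda_{{2},{3}}(H_j). *)
Definition LambdaH (C : 'I_7 -> 'rV[K]_3) (j : 'I_7) (m : 'rV[K]_3) : Prop :=
  m != 0 /\
  exists p1 p2 p3 : 'rV[K]_3,
    [/\ double_pointH C j p1 /\ incident p1 m,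
        double_pointH C j p2 /\ incident p2 m,
        double_pointH C j p3 /\ incident p3 m,
        [/\ ~ proj_eq p1 p2, ~ proj_eq p1 p3 & ~ proj_eq p2 p3]
      & forall p, double_pointH C j p -> incident p m ->
          [\/ proj_eq p p1, proj_eq p p2 | proj_eq p p3]].

End Geometry.

From mathcomp Require Import all_boot all_fingroup all_algebra zify.
From mathcomp Require Import reals complex.
From Stdlib Require Import FunctionalExtensionality.
Set Implicit Arguments. Unset Strict Implicit. Unset Printing Implicit Defensive.

(* Call two elements of the ground set dependent if they lie in a common
   non-basis.  An automorphism preserves non-bases, hence dependence and the
   number of elements dependent on a given one.  An unprimed label c is
   dependent on every element except c and c' (12 of them), a primed one only
   on unprimed labels (at most 7), so automorphisms preserve both halves of the
   ground set; since c' is the only primed label not dependent on c, sigma acts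
   on both halves through one permutation f of {1..7}.  Relabelling by f, the
   curve H_(f j) of the new arrangement is made of the same lines as H_j of the
   old one, so it has the same double points and the same lines through three
   of them. *)

Definition midpoint7 (a b c : 'I_7) : bool := ((a + b) %% 7 == (2 * c) %% 7)%N.

Lemma midpoint7_cancel (a b : 'I_7) : midpoint7 a b a -> b = a.
Proof.
by move=> /eqP ab; apply/val_inj; move: (ltn_ord a) (ltn_ord b) ab => /=; lia.
Qed.

(* 4 is the inverse of 2 modulo 7. *)
Lemma midpoint7_exists (a b : 'I_7) : exists c : 'I_7, midpoint7 a b c.
Proof.
by exists (Ordinal (ltn_pmod (4 * (a + b)) (isT : 0 < 7))); apply/eqP => /=; lia.
Qed.

(* The witness is b = 2c - a. *)
Lemma midpoint7_reflect (a c : 'I_7) :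
  a != c -> exists2 b : 'I_7, b != a & midpoint7 a b c.
Proof.
move=> ac; have ac' : (a : nat) <> c by move=> /val_inj /eqP; apply/negP.
exists (Ordinal (ltn_pmod (2 * c + 6 * a) (isT : 0 < 7))); apply/eqP => /=.
  by move=> /(congr1 val) /=; move: (ltn_ord a) (ltn_ord c); lia.
lia.
Qed.

Lemma M7nonbasisP (B : {set M7ground}) :
  reflect (exists a b c, [/\ a != b, midpoint7 a b c & B = [set inl a; inl b; inr c]])
          (M7nonbasis B).
Proof.
apply: (iffP existsP) => [[a /existsP [b /existsP [c /and3P [ab abc /eqP ->]]]]|].
  by exists a, b, c.
by move=> [a [b [c [ab abc ->]]]]; exists a; apply/existsP; exists b;
  apply/existsP; exists c; apply/and3P.
Qed.

Lemma card_M7nonbasis (B : {set M7ground}) : M7nonbasis B -> #|B| = 3.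
Proof.
case/M7nonbasisP=> a [b [c [ab _ ->]]].
by rewrite setUC cardsU1 cards2 !inE /= (inj_eq inl_inj) ab.
Qed.

Lemma M7nonbasis_inlr (B : {set M7ground}) (c : 'I_7) :
  M7nonbasis B -> inl c \in B -> inr c \notin B.
Proof.
case/M7nonbasisP=> a [b [e [ab abe ->]]].
rewrite !inE /= !(inj_eq inl_inj) (inj_eq inr_inj) orbF.
case/orP=> /eqP ->; apply: contraNneq ab => ce; move: abe; rewrite -ce.
  by move/midpoint7_cancel ->.
by rewrite /midpoint7 addnC => /midpoint7_cancel ->.
Qed.

Lemma M7nonbasis_inr (B : {set M7ground}) (c d : 'I_7) :
  M7nonbasis B -> inr c \in B -> inr d \in B -> c = d.
Proof.
by case/M7nonbasisP=> a [b [e [_ _ ->]]]; rewrite !inE /= => /eqP [->] /eqP [].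
Qed.

Definition M7dep (x y : M7ground) : bool := [exists z, M7nonbasis [set x; y; z]].

Definition M7deg (x : M7ground) : nat := #|[set y | M7dep x y]|.

Lemma M7dep_inl (c : 'I_7) (y : M7ground) :
  M7dep (inl c) y = (y != inl c) && (y != inr c).
Proof.
apply/existsP/andP => [[z nb]|[]].
  split; apply: contraTneq nb => ->.
    by apply/negP => /card_M7nonbasis; rewrite setUid cards2; case: (_ != _).
  by apply/negP => /(M7nonbasis_inlr (c := c)); rewrite !inE !eqxx !orbT => /(_ isT).
case: y => e; rewrite ?(inj_eq inl_inj) ?(inj_eq inr_inj) /=.
- move=> ec _; have [h ceh] := midpoint7_exists c e.
  by exists (inr h); apply/M7nonbasisP; exists c, e, h; rewrite eq_sym.
- rewrite eq_sym => _ ce; have [b bc cbe] := midpoint7_reflect ce.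
  exists (inl b); apply/M7nonbasisP; exists c, b, e; split; rewrite 1?eq_sym //.
  by apply/setP => x; rewrite !inE -!orbA [(x == inr e) || _]orbC.
Qed.

Lemma M7dep_inr (c d : 'I_7) : M7dep (inr c) (inr d) = false.
Proof.
apply/existsP => -[z nb].
have cd : c = d by apply: (M7nonbasis_inr nb); rewrite !inE eqxx ?orbT.
move/card_M7nonbasis: nb; rewrite cd setUid cards2.
by case: (_ != _).
Qed.

Lemma M7deg_inl (c : 'I_7) : M7deg (inl c) = 12.
Proof.
rewrite /M7deg; have -> : [set y | M7dep (inl c) y] = ~: [set inl c; inr c].
  by apply/setP => y; rewrite !inE M7dep_inl negb_or.
have := cardsC [set inl c; inr c :> M7ground].
by rewrite card_sum card_ord cards2 /=; lia.
Qed.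

Lemma M7deg_inr (c : 'I_7) : M7deg (inr c) <= 7.
Proof.
have dep_inl : [set y | M7dep (inr c) y] \subset [set inl d | d : 'I_7].
  by apply/subsetP => -[d|d]; rewrite inE ?M7dep_inr // => _; apply: imset_f.
rewrite /M7deg (leq_trans (subset_leq_card dep_inl)) //.
by rewrite card_imset ?card_ord //; exact: inl_inj.
Qed.

Lemma isAutM7_nonbasis (s : {perm M7ground}) :
  isAutM7 s -> forall B : {set M7ground}, M7nonbasis (s @: B) = M7nonbasis B.
Proof.
move=> s_aut B; have := s_aut B; rewrite /M7basis (card_imset _ perm_inj).
have [B3 /negb_inj //|B3 _] := eqVneq #|B| 3.
by apply/idP/idP => /card_M7nonbasis; rewrite ?(card_imset _ perm_inj) => /eqP;
  rewrite (negbTE B3).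
Qed.

Section NonbasisPreservingPerm.

Variable s : {perm M7ground}.
Hypothesis s_nonbasis : forall B : {set M7ground}, M7nonbasis (s @: B) = M7nonbasis B.

Lemma nonbasis_permV (B : {set M7ground}) :
  M7nonbasis ((s^-1)%g @: B) = M7nonbasis B.
Proof. by rewrite -s_nonbasis -imset_comp (eq_imset _ (permKV s)) imset_id. Qed.

Lemma imset_perm_set3 (x y z : M7ground) : s @: [set x; y; z] = [set s x; s y; s z].
Proof. by rewrite !imsetU !imset_set1. Qed.

Lemma M7dep_perm (x y : M7ground) : M7dep (s x) (s y) = M7dep x y.
Proof.
apply/existsP/existsP => [[z nb]|[z nb]].
  by exists ((s^-1)%g z); rewrite -s_nonbasis imset_perm_set3 permKV.
by exists (s z); rewrite -imset_perm_set3 s_nonbasis.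
Qed.


Lemma M7deg_perm (x : M7ground) : M7deg (s x) = M7deg x.
Proof.
rewrite /M7deg -(card_preimset _ (@perm_inj _ s)).
by apply: eq_card => y; rewrite !inE M7dep_perm.
Qed.

Lemma perm_inl (a : 'I_7) : exists b, s (inl a) = inl b.
Proof.
case sa: (s (inl a)) => [b|c]; first by exists b.
by have := M7deg_inr c; rewrite -sa M7deg_perm M7deg_inl.
Qed.

End NonbasisPreservingPerm.

Lemma isAutM7_sum_map (s : {perm M7ground}) :
  isAutM7 s -> exists f : 'I_7 -> 'I_7,
    forall k, s (inl k) = inl (f k) /\ s (inr k) = inr (f k).
Proof.
move=> /isAutM7_nonbasis s_nb.
pose f k := if s (inl k) is inl b then b else k.
have sf k : s (inl k) = inl (f k) by rewrite /f; have [b ->] := perm_inl s_nb k.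
exists f => k; split=> //.
case sk: (s (inr k)) => [b|d].
  have [b' sb'] := perm_inl (nonbasis_permV s_nb) b.
  by move: sb'; rewrite -sk permK.
have := M7dep_perm s_nb (inl k) (inr k).
by rewrite sf sk !M7dep_inl eqxx andbF /= => /eqP [->].
Qed.

Section LambdaRelabel.

Variable K : fieldType.

Lemma multH_relabel (f : 'I_7 -> 'I_7) (C D : 'I_7 -> 'rV[K]_3) :
  injective f -> (forall k, D (f k) = C k) -> forall a, multH D (f a) =1 multH C a.
Proof.
move=> f_inj DC a p; rewrite /multH -!sum1_card (reindex_inj f_inj) /=.
by apply: eq_bigl => k; rewrite !inE (inj_eq f_inj) DC.
Qed.

Lemma LambdaH_multH (C C' : 'I_7 -> 'rV[K]_3) (j j' : 'I_7) :
  multH C j =1 multH C' j' -> forall m, LambdaH C j m <-> LambdaH C' j' m.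
Proof.
by move=> /functional_extensionality CC' m; rewrite /LambdaH /double_pointH CC'.
Qed.

End LambdaRelabel.

Local Open Scope ring_scope.

Theorem proposition3p6 (R : realType) (s : {perm M7ground}) :
  isAutM7 s ->
  (forall (C0 D : 'I_7 -> 'rV[R[i]]_3),
     arrangement7 C0 ->
     (forall a b : 'I_7, s (inl a) = inl b -> D b = C0 a) ->
     forall a b : 'I_7, s (inr a) = inr b ->
       forall m : 'rV[R[i]]_3, LambdaH D b m <-> LambdaH C0 a m)
  /\
  (forall (C1 D1 : 'I_7 -> 'rV[R[i]]_3),
     arrangement7 C1 ->
     (forall a b : 'I_7, s (inr a) = inr b -> D1 b = C1 a) ->
     forall a b : 'I_7, s (inl a) = inl b ->
       forall m : 'rV[R[i]]_3, LambdaH D1 b m <-> LambdaH C1 a m).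
Proof.
move=> /isAutM7_sum_map [f sf].
have f_inj : injective f.
  by move=> x y fxy; have := (sf x).1; rewrite fxy -(sf y).1 => /perm_inj [].
split=> [C0 D _ DC a b | C1 D1 _ DC a b].
- rewrite (sf a).2 => -[<-]; apply/LambdaH_multH/multH_relabel => // k.
  exact: DC (sf k).1.
- rewrite (sf a).1 => -[<-]; apply/LambdaH_multH/multH_relabel => // k.
  exact: DC (sf k).2.
Qed.
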